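(* Let $\mathcal{S}$ be a parametrized system and let $\varphi$ be a parametrized formula (candidate invariant) with set of free thread-identifier variables $\mathrm{Var}(\varphi)$. Suppose the following three families of formulas are valid in the theory $T$: (P1) $\Theta(\mathrm{Var}(\varphi)) \rightarrow \varphi$; (P2) for every program location $\ell$ and every $k\in \mathrm{Var}(\varphi)$: $\varphi \wedge \tau_\ell^{(k)} \rightarrow \varphi'$; (P3) for every program location $\ell$, where $j$ is a fresh thread-identifier variable not in $\mathrm{Var}(\varphi)$: $\varphi \wedge \bigwedge_{k\in\mathrm{Var}(\varphi)} j\neq k \wedge \tau_\ell^{(j)} \rightarrow \varphi'$. Then $\mathcal{S}\vDash \Box\varphi$, i.e. $\varphi$ is a parametrized invariant of $\mathcal{S}$.
   Context: A parametrized program consists of a finite set of global variables $V_{global}$, a finite set of local variables $V_{local}$ (including a program counter $pc$ ranging over locations $1,\dots,L$), a global initial condition $\Theta_g$ over $V_{global}$, a local initial condition $\Theta_l$ over $V_{global}\cup V_{local}$, and for each location $\ell$ a transition relation $\tau_\ell$ over unprimed and primed (post-state) variables. For each $M\geq 1$, with $[M]=\{0,\dots,M-1\}$, the instance $\mathcal{S}[M]$ is the transition system with variables $V_{global}\cup\{v[a] : v\in V_{local}, a\in[M]\}$, initial condition $\Theta_g\wedge\bigwedge_{a\in[M]}\Theta_l[a]$ (replace each $v$ by $v[a]$), and transitions $\tau_\ell[a]$ for each $\ell$ and $a\in[M]$ (replace $v$ by $v[a]$ and $v'$ by $v'[a]$; all local variables of other threads are unchanged), with interleaving semantics. A run is an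 infinite sequence of states starting in an initial state with each step given by some transition. Thread identifiers form a sort $\mathsf{tid}$ (an unbounded set with only $=$ and $\neq$). For each local variable $v$ of sort $t$ there is a global array $a_v$ of sort $\mathsf{tid}\to t$, written $v(k)$ for reads and $v\{k\leftarrow e\}$ for updates. $T$ is the combination of the data theory of the program, the theory of $\mathsf{tid}$, and the theory of arrays. A parametrized formula is a first-order formula over $T$ using the global variables, the arrays $a_v$, and free variables of sort $\mathsf{tid}$ (no constant thread identifiers); $\mathrm{Var}(\varphi)$ is its set of free $\mathsf{tid}$ variables and $\varphi'$ is $\varphi$ with all program variables primed. For a set $X$ of $\mathsf{tid}$ variables, $\Theta(X)=\Theta_g\wedge\bigwedge_{k\in X}\Theta_l(k)$ where $\Theta_l(k)$ replaces each local $v$ by $v(k)$. For a $\mathsf{tid}$ variable $k$, $\tau_\ell^{(k)}$ is $\tau_\ell$ with each local $v$ replaced by $v(k)$, each $v'$ by $v'(k)$, and with all other array entries preserved (arrays $a_v'$ and $a_v$ agree except possibly at $k$). A concretization of $\varphi$ for $N$ threads is a map $\alpha:\mathrm{Var}(\varphi)\to[N]$, and $\alpha(\varphi)$ is the state predicate of $\mathcal{S}[N]$ obtained by replacing $v(k)$ by $v[\alpha(k)]$ (array updates at position $k$ are interpreted as updating $v[\alpha(k)]$ and preserving $v[a]$ for $a\neq\alpha(k)$). $\mathcal{S}\vDash\Box\varphi$ means: for every $N$ and every concretization $\alpha:\mathrm{Var}(\varphi)\to[N]$, every state of every run of $\mathcal{S}[N]$ satisfies $\alpha(\varphi)$. 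*)

From mathcomp Require Import all_boot.
Set Implicit Arguments. Unset Strict Implicit. Unset Printing Implicit Defensive.

(* Semantic model of a parametrized program:
   - G : type of valuations of the global variables V_global;
   - L : type of valuations of the local variables V_local (incl. pc);
   - Thg : G -> Prop                 (global initial condition Theta_g);
   - Thl : G -> L -> Prop            (local initial condition Theta_l);
   - tau l : G -> L -> G -> L -> Prop (transition relation of location l,
       over unprimed globals/locals and primed globals/locals).
   Arrays a_v for all local variables v are packed into one array
   arr : Tid -> L (arr k = valuation of all locals of thread k). *)

Definition ThetaX (G L Tid X : Type) (Thg : G -> Prop) (Thl : G -> L -> Prop)
  (g : G) (arr : Tid -> L) (rho : X -> Tid) : Prop :=
  Thg g /\ forall k : X, Thl g (arr (rho k)).

Definition tau_at (G L Tid : Type) (tau : G -> L -> G -> L -> Prop) (k : Tid)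
  (g : G) (arr : Tid -> L) (g' : G) (arr' : Tid -> L) : Prop :=
  tau g (arr k) g' (arr' k) /\ forall i : Tid, i <> k -> arr' i = arr i.

Definition inst_state (G L : Type) (M : nat) : Type := (G * ('I_M -> L))%type.

Definition inst_init (G L : Type) (Thg : G -> Prop) (Thl : G -> L -> Prop)
  (M : nat) (s : inst_state G L M) : Prop :=
  Thg s.1 /\ forall a : 'I_M, Thl s.1 (s.2 a).

Definition inst_step (G L : Type) (nloc : nat)
  (tau : 'I_nloc -> G -> L -> G -> L -> Prop)
  (M : nat) (s s' : inst_state G L M) : Prop :=
  exists (l : 'I_nloc) (a : 'I_M),
    tau l s.1 (s.2 a) s'.1 (s'.2 a) /\ forall b : 'I_M, b <> a -> s'.2 b = s.2 b.

Definition inst_run (G L : Type) (nloc : nat) (Thg : G -> Prop)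
  (Thl : G -> L -> Prop) (tau : 'I_nloc -> G -> L -> G -> L -> Prop)
  (M : nat) (r : nat -> inst_state G L M) : Prop :=
  inst_init Thg Thl (r 0) /\ forall i, inst_step tau (r i) (r i.+1).

(* A parametrized formula with free tid variables X is modelled semantically
   by its truth value in every interpretation of the sort tid (any type Tid),
   given globals g, the arrays arr : Tid -> L, and a valuation rho : X -> Tid. *)
Definition always_holds (G L X : Type) (nloc : nat) (Thg : G -> Prop)
  (Thl : G -> L -> Prop) (tau : 'I_nloc -> G -> L -> G -> L -> Prop)
  (phi : forall Tid : Type, G -> (Tid -> L) -> (X -> Tid) -> Prop) : Prop :=
  forall (N : nat) (alpha : X -> 'I_N) (r : nat -> inst_state G L N),
    inst_run Thg Thl tau r -> forall i : nat, phi 'I_N (r i).1 (r i).2 alpha.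

From mathcomp Require Import all_boot.

Set Implicit Arguments.
Unset Strict Implicit.
Unset Printing Implicit Defensive.

(* In a concrete instance a
   transition is taken by one thread a; for a fixed concretization alpha,
   either a is the image alpha k of some free variable k, which is case (P2),
   or a differs from every alpha k, which is case (P3) with j := a. *)

Lemma run_inductive_invariant (S : Type) (init : S -> Prop)
    (step : S -> S -> Prop) (P : S -> Prop) (r : nat -> S) :
  (forall s, init s -> P s) -> (forall s s', P s -> step s s' -> P s') ->
  init (r 0) -> (forall i, step (r i) (r i.+1)) -> forall i, P (r i).
Proof.
move=> initP stepP r0 rS; elim=> [|i IHi]; first exact: initP.
exact: stepP IHi (rS i).
Qed.

Lemma image_or_fresh (X : finType) (T : eqType) (rho : X -> T) (a : T) :
  (exists k, a = rho k) \/ (forall k, a <> rho k).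
Proof.
case: (pickP (fun k => rho k == a)) => [k /eqP <- | fresh]; first by left; exists k.
by right=> k ak; move: (fresh k); rewrite ak eqxx.
Qed.

Lemma inst_init_ThetaX (G L X : Type) (Thg : G -> Prop) (Thl : G -> L -> Prop)
    (M : nat) (s : inst_state G L M) (rho : X -> 'I_M) :
  inst_init Thg Thl s -> ThetaX Thg Thl s.1 s.2 rho.
Proof. by case=> initg initl; split. Qed.

Lemma inst_step_tau_at (G L : Type) (nloc : nat)
    (tau : 'I_nloc -> G -> L -> G -> L -> Prop) (M : nat)
    (s s' : inst_state G L M) :
  inst_step tau s s' -> exists l a, tau_at (tau l) a s.1 s.2 s'.1 s'.2.
Proof. by case=> l [a stepa]; exists l, a. Qed.

Section LocalStep.

Variables (G L : Type) (nloc : nat) (tau : 'I_nloc -> G -> L -> G -> L -> Prop).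
Variables (X : finType) (phi : forall Tid : Type, G -> (Tid -> L) -> (X -> Tid) -> Prop).

Hypothesis phi_step_var :
  forall (l : 'I_nloc) (k : X) (Tid : Type) (g g' : G) (arr arr' : Tid -> L)
         (rho : X -> Tid),
    phi g arr rho -> tau_at (tau l) (rho k) g arr g' arr' ->
    phi g' arr' rho.

Hypothesis phi_step_fresh :
  forall (l : 'I_nloc) (Tid : Type) (g g' : G) (arr arr' : Tid -> L)
         (rho : X -> Tid) (j : Tid),
    phi g arr rho -> (forall k : X, j <> rho k) ->
    tau_at (tau l) j g arr g' arr' -> phi g' arr' rho.

Lemma phi_tau_at (Tid : eqType) (l : 'I_nloc) (a : Tid) (g g' : G)
    (arr arr' : Tid -> L) (rho : X -> Tid) :
  phi g arr rho -> tau_at (tau l) a g arr g' arr' -> phi g' arr' rho.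
Proof.
move=> phi_s step_a; have [[k ak] | fresh] := image_or_fresh rho a.
  by rewrite ak in step_a; apply: phi_step_var phi_s step_a.
exact: phi_step_fresh phi_s fresh step_a.
Qed.

Lemma phi_inst_step (M : nat) (rho : X -> 'I_M) (s s' : inst_state G L M) :
  phi s.1 s.2 rho -> inst_step tau s s' -> phi s'.1 s'.2 rho.
Proof. by move=> phi_s /inst_step_tau_at [l [a]]; apply: phi_tau_at phi_s. Qed.

End LocalStep.

Theorem theorem1 (G L : Type) (nloc : nat) (Thg : G -> Prop)
  (Thl : G -> L -> Prop) (tau : 'I_nloc -> G -> L -> G -> L -> Prop)
  (X : finType)
  (phi : forall Tid : Type, G -> (Tid -> L) -> (X -> Tid) -> Prop) :
  (forall (Tid : Type) (g : G) (arr : Tid -> L) (rho : X -> Tid),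
      ThetaX Thg Thl g arr rho -> phi Tid g arr rho) ->
  (forall (l : 'I_nloc) (k : X) (Tid : Type) (g g' : G) (arr arr' : Tid -> L)
          (rho : X -> Tid),
      phi Tid g arr rho -> tau_at (tau l) (rho k) g arr g' arr' ->
      phi Tid g' arr' rho) ->
  (forall (l : 'I_nloc) (Tid : Type) (g g' : G) (arr arr' : Tid -> L)
          (rho : X -> Tid) (j : Tid),
      phi Tid g arr rho -> (forall k : X, j <> rho k) ->
      tau_at (tau l) j g arr g' arr' -> phi Tid g' arr' rho) ->
  always_holds Thg Thl tau phi.
Proof.
move=> init_phi step_var step_fresh N alpha r [r0 rS].
apply: (run_inductive_invariant (P := fun s => phi _ s.1 s.2 alpha) _ _ r0 rS).
- by move=> s /(inst_init_ThetaX alpha); apply: init_phi.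
- by move=> s s'; apply: phi_inst_step.
Qed.
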